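(* Let $\mathbf X\in\mathbb R^{n\times T}$, $k\le n$, and for $\mathbf W\in\mathbb R^{k\times n}$, $\mathbf M\in\mathbb R^{k\times k}$, $\mathbf Y\in\mathbb R^{k\times T}$ define $$L_{PSP}(\mathbf W,\mathbf M,\mathbf Y)=\mathrm{Tr}\Big(-\frac4T\mathbf X^\top\mathbf W^\top\mathbf Y+\frac2T\mathbf Y^\top\mathbf M\mathbf Y\Big)+2\mathrm{Tr}(\mathbf W^\top\mathbf W)-\mathrm{Tr}(\mathbf M^\top\mathbf M).$$ Then (a) for every $\mathbf Y$, $\min_{\mathbf W}\max_{\mathbf M}L_{PSP}(\mathbf W,\mathbf M,\mathbf Y)=\frac1{T^2}\|\mathbf X^\top\mathbf X-\mathbf Y^\top\mathbf Y\|_F^2-\frac1{T^2}\|\mathbf X^\top\mathbf X\|_F^2$, attained at $\mathbf W=\frac1T\mathbf Y\mathbf X^\top$, $\mathbf M=\frac1T\mathbf Y\mathbf Y^\top$; and (b) for every $\mathbf W$, $$\max_{\mathbf M}\min_{\mathbf Y}L_{PSP}(\mathbf W,\mathbf M,\mathbf Y)=\min_{\mathbf Y}\max_{\mathbf M}L_{PSP}(\mathbf W,\mathbf M,\mathbf Y)=\mathrm{Tr}\Big(-\frac3{T^{2/3}}(\mathbf W\mathbf X\mathbf X^\top\mathbf W^\top)^{2/3}+2\mathbf W\mathbf W^\top\Big).$$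
   Context: Matrix fractional powers of positive semidefinite matrices are defined via eigendecomposition; $\|\cdot\|_F$ is the Frobenius norm. *)

From HB Require Import structures.
From mathcomp Require Import all_boot all_order all_algebra.
Set Implicit Arguments. Unset Strict Implicit. Unset Printing Implicit Defensive.
Import Order.TTheory GRing.Theory Num.Theory.
Local Open Scope ring_scope.

Section Defs.
Variable R : rcfType.

Definition fnorm (m p : nat) (A : 'M[R]_(m, p)) : R :=
  Num.sqrt (\sum_(i < m) \sum_(j < p) A i j ^+ 2).

Definition is_pow23 (x y : R) : Prop := 0 <= x /\ 0 <= y /\ y ^+ 3 = x ^+ 2.

Definition is_mxpow23 (n : nat) (A P : 'M[R]_n) : Prop :=
  exists (Q : 'M[R]_n) (d e : 'rV[R]_n),
    [/\ Q^T *m Q = 1%:M,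
        forall i, is_pow23 (d 0 i) (e 0 i),
        A = Q *m diag_mx d *m Q^T &
        P = Q *m diag_mx e *m Q^T].

Definition Lpsp (n k T : nat) (X : 'M[R]_(n, T))
  (W : 'M[R]_(k, n)) (M : 'M[R]_k) (Y : 'M[R]_(k, T)) : R :=
  \tr (- (4 / T%:R) *: (X^T *m W^T *m Y) + (2 / T%:R) *: (Y^T *m M *m Y))
  + 2 * \tr (W^T *m W) - \tr (M^T *m M).

(* min_a max_b f a b = v, attained at (a0, b0):
   max_b f a0 b = f a0 b0 = v, and for every a, sup_b f a b >= v. *)
Definition minmax_at (A B : Type) (f : A -> B -> R) (a0 : A) (b0 : B) (v : R) : Prop :=
  [/\ f a0 b0 = v,
      forall b, f a0 b <= v &
      forall a u, (forall b, f a b <= u) -> v <= u].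

Definition minmax_value (A B : Type) (f : A -> B -> R) (v : R) : Prop :=
  exists a0 b0, minmax_at f a0 b0 v.

(* max_a min_b f a b = v, attained:
   min_b f a0 b = f a0 b0 = v, and for every a, inf_b f a b <= v
   (inf possibly -infinity). *)
Definition maxmin_value (A B : Type) (f : A -> B -> R) (v : R) : Prop :=
  exists a0 b0,
  [/\ f a0 b0 = v,
      forall b, v <= f a0 b &
      forall a u, (forall b, u <= f a b) -> u <= v].

End Defs.

(* Completing the square in W and in M shows that (a) is attained at
   W = Y X^T / T, M = Y Y^T / T.  For (b), with C := W X, the function
   M |-> L(W, M, Y) is concave and Y |-> L(W, M, Y) is convex whenever M is
   positive semidefinite, so it suffices to exhibit a saddle point: take
   M0 = Y0 Y0^T / T, where Y0 solves Y0 Y0^T Y0 = T C, i.e.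
   Y0 = T^(1/3) (C C^T)^(-1/3) C computed in an orthonormal eigenbasis of
   C C^T.  Such a basis exists because a real symmetric matrix has a real
   eigenvector in every nonzero invariant subspace (its complex eigenvalues
   are real).  The saddle value is
   -3 T^(-2/3) Tr (C C^T)^(2/3) + 2 Tr (W W^T); since all saddle points of a
   function share their value, it does not depend on the chosen
   eigendecomposition defining the matrix power. *)

From HB Require Import structures.
From mathcomp Require Import all_boot all_order all_algebra.
From mathcomp Require Import ring lra.
From mathcomp Require Import complex.
Import Order.TTheory GRing.Theory Num.Theory.
Local Open Scope ring_scope.

Set Implicit Arguments. Unset Strict Implicit. Unset Printing Implicit Defensive.

Definition frob {R : comPzRingType} {m p : nat} (A B : 'M[R]_(m, p)) : R :=
  \tr (A^T *m B).

Section FrobeniusProduct.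
Variables (R : comPzRingType) (m p : nat).
Implicit Types A B D : 'M[R]_(m, p).

Lemma frobC A B : frob A B = frob B A.
Proof. by rewrite /frob -mxtrace_tr trmx_mul trmxK. Qed.

Lemma frobDl A B D : frob (A + B) D = frob A D + frob B D.
Proof. by rewrite /frob linearD /= mulmxDl mxtraceD. Qed.

Lemma frobNl A D : frob (- A) D = - frob A D.
Proof. by rewrite /frob linearN /= mulNmx linearN. Qed.

Lemma frobZl c A D : frob (c *: A) D = c * frob A D.
Proof. by rewrite /frob linearZ /= -scalemxAl mxtraceZ. Qed.

Lemma frobDr A B D : frob D (A + B) = frob D A + frob D B.
Proof. by rewrite frobC frobDl ![frob _ D]frobC. Qed.

Lemma frobNr A D : frob D (- A) = - frob D A.
Proof. by rewrite frobC frobNl frobC. Qed.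

Lemma frobZr c A D : frob D (c *: A) = c * frob D A.
Proof. by rewrite frobC frobZl frobC. Qed.

Lemma frob0 : frob (0 : 'M[R]_(m, p)) 0 = 0.
Proof. by rewrite /frob mulmx0 mxtrace0. Qed.

Lemma frobBB A B : frob (A - B) (A - B) = frob A A - 2 * frob A B + frob B B.
Proof. rewrite frobDl !frobDr !frobNl !frobNr opprK (frobC B A); ring. Qed.

Lemma frob_sqr A : frob A A = \sum_(i < m) \sum_(j < p) A i j ^+ 2.
Proof.
rewrite /frob /mxtrace exchange_big /=; apply: eq_bigr => j _.
by rewrite mxE; apply: eq_bigr => i _; rewrite mxE expr2.
Qed.

End FrobeniusProduct.

Lemma frob_mulmxl (R : comPzRingType) m n p (A : 'M[R]_(m, n)) (B : 'M_(n, p))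
    (C : 'M_(m, p)) :
  frob (A *m B) C = frob B (A^T *m C).
Proof. by rewrite /frob trmx_mul mulmxA. Qed.

Lemma frob_mulmxTr (R : comPzRingType) m n p (A : 'M[R]_(m, n)) (B : 'M_(m, p))
    (C : 'M_(n, p)) :
  frob A (B *m C^T) = frob (A *m C) B.
Proof. by rewrite /frob mulmxA mxtrace_mulC trmx_mul mulmxA. Qed.

Section FrobeniusNorm.
Variables (R : realDomainType) (m p : nat).
Implicit Types A : 'M[R]_(m, p).

Lemma frob_ge0 A : 0 <= frob A A.
Proof.
by rewrite frob_sqr; apply: sumr_ge0 => i _; apply: sumr_ge0 => j _; rewrite sqr_ge0.
Qed.

Lemma frob_eq0 A : (frob A A == 0) = (A == 0).
Proof.
apply/idP/eqP => [|->]; last by rewrite frob0.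
rewrite frob_sqr psumr_eq0 => [/allP A0|i _]; last first.
  by apply: sumr_ge0 => j _; rewrite sqr_ge0.
apply/matrixP => i j; rewrite mxE; apply/eqP; rewrite -sqrf_eq0.
move: (A0 i (mem_index_enum _)); rewrite implyTb psumr_eq0 => [/allP/(_ j)|]; last first.
  by move=> l _; rewrite sqr_ge0.
by rewrite mem_index_enum implyTb => /(_ isT).
Qed.

End FrobeniusNorm.

Lemma fnorm_sqr (R : rcfType) m p (A : 'M[R]_(m, p)) : fnorm A ^+ 2 = frob A A.
Proof. by rewrite /fnorm sqr_sqrtr -frob_sqr ?frob_ge0. Qed.

Lemma fnorm_gram_gap (R : rcfType) n k T (X : 'M[R]_(n, T)) (Y : 'M[R]_(k, T)) :
  fnorm (X^T *m X - Y^T *m Y) ^+ 2 - fnorm (X^T *m X) ^+ 2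
  = frob (Y *m Y^T) (Y *m Y^T) - 2 * frob (Y *m X^T) (Y *m X^T).
Proof.
have cross : frob (X^T *m X) (Y^T *m Y) = frob (Y *m X^T) (Y *m X^T).
  by rewrite /frob !trmx_mul !trmxK !mulmxA [RHS]mxtrace_mulC !mulmxA.
have gramY : frob (Y^T *m Y) (Y^T *m Y) = frob (Y *m Y^T) (Y *m Y^T).
  by rewrite /frob !trmx_mul !trmxK !mulmxA [RHS]mxtrace_mulC !mulmxA.
rewrite !fnorm_sqr frobBB cross gramY; ring.
Qed.

Lemma hermitian_eigenvalue_real (C : numClosedFieldType) p (A : 'M[C]_p)
    (z : 'rV_p) a :
  map_mx Num.conj A^T = A -> z != 0 -> z *m A = a *: z -> a \is Num.real.
Proof.
move=> hermA nz_z zA; pose zc := map_mx Num.conj z.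
pose N := (z *m zc^T) 0 0.
have N_neq0 : N != 0.
  apply: contra nz_z; rewrite /N mxE psumr_eq0 => [/allP z0|j _]; last first.
    by rewrite !mxE mul_conjC_ge0.
  apply/eqP/rowP => j; move/implyP: (z0 j (mem_index_enum _)) => /(_ isT).
  by rewrite !mxE mul_conjC_eq0 => /eqP.
(* Evaluate z A zc^T in two ways: it equals a N and conj(a) N. *)
have zcA : zc *m map_mx Num.conj A = Num.conj a *: zc.
  by rewrite -map_mxM zA map_mxZ.
have : z *m A *m zc^T = z *m (zc *m map_mx Num.conj A)^T.
  by rewrite trmx_mul (map_trmx _ A) hermA mulmxA.
rewrite zcA zA linearZ /= -scalemxAr -scalemxAl => /matrixP/(_ 0 0).
by rewrite !mxE => aN; apply/CrealP/(mulIf N_neq0); rewrite /N mxE aN.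
Qed.

Lemma sym_eigenvector_sub (R : rcfType) p r (A : 'M[R]_p) (U : 'M[R]_(r, p)) :
  A^T = A -> (U *m A <= U)%MS -> U != 0 ->
  exists lam (x : 'rV_p), [/\ x != 0, (x <= U)%MS & x *m A = lam *: x].
Proof.
move=> symA stabU nzU; pose K := row_base U.
have rank_gt0 : (0 < \rank U)%N by rewrite lt0n mxrank_eq0.
have stabK : (K *m A <= K)%MS by rewrite (eqmxMr A (eq_row_base U)) eq_row_base.
pose A' := K *m A *m pinvmx K.
have A'K : A' *m K = K *m A by exact: mulmxKpV.
pose phi := real_complex R.
have [a eig_a] := eigenvalue_closed (map_mx phi A') rank_gt0.
have /eigenvalueP [v vA' nz_v] := eig_a.
pose z := v *m map_mx phi K.
have nz_z : z != 0 by rewrite mulmx_free_eq0 ?row_free_map ?row_base_free.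
have zA : z *m map_mx phi A = a *: z.
  by rewrite -mulmxA -map_mxM -A'K map_mxM mulmxA vA' scalemxAl.
have hermA : map_mx Num.conj (map_mx phi A)^T = map_mx phi A.
  apply/matrixP => i j; rewrite !mxE -[in RHS]symA mxE.
  by apply/CrealP/complex_realP; exists (A j i).
have /complex_realP [lam a_lam] := hermitian_eigenvalue_real hermA nz_z zA.
have /eigenvalueP [y yA' nz_y] : eigenvalue A' lam.
  rewrite eigenvalue_root_char -(fmorph_root phi) map_char_poly.
  by rewrite -eigenvalue_root_char; move: eig_a; rewrite a_lam.
exists lam, (y *m K); split.
- by rewrite mulmx_free_eq0 ?row_base_free.
- by rewrite (submx_trans (submxMl _ _)) ?eq_row_base.
- by rewrite -mulmxA -A'K mulmxA yA' scalemxAl.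
Qed.

Lemma row_normalize (R : rcfType) p (x : 'rV[R]_p) :
  x != 0 -> exists c : R, (c *: x) *m (c *: x)^T = 1%:M.
Proof.
move=> nz_x; pose N := frob x^T x^T.
have N_gt0 : 0 < N by rewrite lt_def frob_eq0 trmx_eq0 nz_x frob_ge0.
have xxt : x *m x^T = N%:M by rewrite /N /frob trmxK {1}(mx11_scalar (x *m x^T)) trace_mx11.
exists (Num.sqrt N)^-1; rewrite linearZ /= -scalemxAl -scalemxAr scalerA.
by rewrite -expr2 exprVn sqr_sqrtr ?ltW // xxt scale_scalar_mx mulVf ?gt_eqF.
Qed.

Lemma sym_orthonormal_extend (R : rcfType) p m (A : 'M[R]_p) (B : 'M_(m, p))
    (d : 'rV_m) :
  A^T = A -> B *m B^T = 1%:M -> B *m A = diag_mx d *m B -> (m < p)%N ->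
  exists lam (x : 'rV_p), [/\ x *m x^T = 1%:M, x *m B^T = 0 & x *m A = lam *: x].
Proof.
move=> symA BBt BA lt_mp; pose U := kermx B^T.
have rankB : \rank B = m.
  by apply/eqP; rewrite eqn_leq rank_leq_row -{1}(mxrank1 R m) -BBt mxrankM_maxl.
have nzU : U != 0 by rewrite -mxrank_eq0 mxrank_ker mxrank_tr rankB subn_eq0 -ltnNge.
have stabU : (U *m A <= U)%MS.
  have ABt : A *m B^T = B^T *m diag_mx d.
    by rewrite -{1}symA -trmx_mul BA trmx_mul tr_diag_mx.
  by apply/sub_kermxP; rewrite -mulmxA ABt mulmxA mulmx_ker mul0mx.
have [lam [x [nz_x /sub_kermxP xBt xA]]] := sym_eigenvector_sub symA stabU nzU.
have [c cx1] := row_normalize nz_x.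
exists lam, (c *: x); split => //.
- by rewrite -scalemxAl xBt scaler0.
- by rewrite -scalemxAl xA !scalerA mulrC.
Qed.

Lemma sym_orthonormal_eigenrows (R : rcfType) p (A : 'M[R]_p) m :
  A^T = A -> (m <= p)%N ->
  exists (B : 'M_(m, p)) (d : 'rV_m), B *m B^T = 1%:M /\ B *m A = diag_mx d *m B.
Proof.
move=> symA; elim: m => [|m IHm] le_mp.
  by exists 0, 0; rewrite [_ *m _]flatmx0 [1%:M]flatmx0 [_ *m A]flatmx0 [_ *m 0]flatmx0.
have [B [d [BBt BA]]] := IHm (ltnW le_mp).
have [lam [x [xxt xBt xA]]] := sym_orthonormal_extend symA BBt BA le_mp.
have Bxt : B *m x^T = 0 by rewrite -[B]trmxK -trmx_mul xBt trmx0.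
suff : exists (B' : 'M_(1 + m, p)) (d' : 'rV_(1 + m)),
    B' *m B'^T = 1%:M /\ B' *m A = diag_mx d' *m B' by [].
exists (col_mx x B), (row_mx (const_mx lam) d); split.
  by rewrite tr_col_mx mul_col_row xxt xBt Bxt BBt -scalar_mx_block.
rewrite mul_col_mx diag_mx_row mul_block_col !mul0mx addr0 add0r xA BA.
by rewrite diag_const_mx mul_scalar_mx.
Qed.

Theorem sym_spectral (R : rcfType) p (A : 'M[R]_p) :
  A^T = A -> exists (Q : 'M_p) (d : 'rV_p),
    Q^T *m Q = 1%:M /\ A = Q *m diag_mx d *m Q^T.
Proof.
move=> symA; have [B [d [BBt BA]]] := sym_orthonormal_eigenrows symA (leqnn p).
exists B^T, d; rewrite trmxK; split => //.
by rewrite -mulmxA -BA mulmxA (mulmx1C BBt) mul1mx.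
Qed.

Section GramCubeRoot.
Variables (R : realFieldType) (k T : nat).
Implicit Types (C Z : 'M[R]_(k, T)) (Q : 'M[R]_k) (d s : 'rV[R]_k).

Lemma gram_diag_entry Z d i : Z *m Z^T = diag_mx d -> d 0 i = \sum_j Z i j ^+ 2.
Proof.
move=> /matrixP/(_ i i); rewrite !mxE eqxx mulr1n => <-.
by apply: eq_bigr => j _; rewrite mxE expr2.
Qed.

Lemma gram_diag_rotate C Q d :
  Q^T *m Q = 1%:M -> C *m C^T = Q *m diag_mx d *m Q^T ->
  (Q^T *m C) *m (Q^T *m C)^T = diag_mx d.
Proof.
move=> QtQ CCt; rewrite trmx_mul trmxK mulmxA -(mulmxA _ C) CCt !mulmxA QtQ.
by rewrite mul1mx -mulmxA QtQ mulmx1.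
Qed.

(* With 0^-1 = 0, [Y] is the pseudo-inverse of (Z Z^T)^(1/3) applied to Z;
   the rows of Z killed by the junk value are zero anyway. *)
Lemma diag_gram_cube_root Z d s :
  Z *m Z^T = diag_mx d -> (forall i, s 0 i ^+ 3 = d 0 i) ->
  let Y := diag_mx (map_mx GRing.inv s) *m Z in
  Y *m Y^T *m Y = Z /\ frob Z Y = \sum_i s 0 i ^+ 2.
Proof.
move=> ZZt s3 Y.
have YYt : Y *m Y^T = diag_mx (map_mx GRing.inv s) *m diag_mx d
                      *m diag_mx (map_mx GRing.inv s).
  by rewrite trmx_mul tr_diag_mx !mulmxA -(mulmxA _ Z) ZZt.
split.
- apply/matrixP => i j; rewrite YYt /Y mulmxA !mulmx_diag mul_diag_mx !mxE -s3.
  have [s0|s_neq0] := eqVneq (s 0 i) 0; last by field.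
  suff -> : Z i j = 0 by rewrite mulr0.
  apply/eqP; rewrite -sqrf_eq0; move: (gram_diag_entry i ZZt).
  rewrite -s3 s0 expr0n /= => /esym /eqP; rewrite psumr_eq0 => [/allP/(_ j)|l _].
    by rewrite mem_index_enum implyTb => /(_ isT).
  by rewrite sqr_ge0.
- rewrite /frob /Y mxtrace_mulC -mulmxA ZZt mulmx_diag mxtrace_diag.
  apply: eq_bigr => i _; rewrite !mxE -s3.
  by have [->|s_neq0] := eqVneq (s 0 i) 0; [rewrite !expr0n mulr0 | field].
Qed.

Lemma gram_cube_root C Q d s (t : R) :
  Q^T *m Q = 1%:M -> C *m C^T = Q *m diag_mx d *m Q^T ->
  (forall i, s 0 i ^+ 3 = d 0 i) ->
  exists Y, Y *m Y^T *m Y = t ^+ 3 *: C /\ frob C Y = t * \sum_i s 0 i ^+ 2.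
Proof.
move=> QtQ CCt s3; have QQt := mulmx1C QtQ.
have [cubeY frobY] := diag_gram_cube_root (gram_diag_rotate QtQ CCt) s3.
set Y := _ *m (Q^T *m C) in cubeY frobY.
exists (t *: (Q *m Y)); split.
- rewrite !linearZ /= -!scalemxAl !scalerA.
  have -> : Q *m Y *m (Q *m Y)^T *m (Q *m Y) = Q *m (Y *m Y^T *m Y).
    by rewrite trmx_mul !mulmxA -[_ *m Q^T *m Q]mulmxA QtQ mulmx1.
  by rewrite cubeY mulmxA QQt mul1mx -expr2 -exprSr.
- by rewrite frobZr frobC frob_mulmxl frobC frobY.
Qed.

End GramCubeRoot.

Lemma pow23_exists (R : rcfType) (x : R) : 0 <= x -> exists y, is_pow23 x y.
Proof.
move=> x_ge0; have x1_ge0 : 0 <= x + 1 by lra.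
have : ('X^3 - x%:P).[0] <= 0 <= ('X^3 - x%:P).[x + 1].
  by rewrite !hornerE expr0n sub0r oppr_le0 x_ge0 subr_ge0 /=; nra.
case/(poly_ivt x1_ge0) => c /andP [c_ge0 _].
rewrite /root !hornerE subr_eq0 => /eqP c3.
exists (c ^+ 2); split; rewrite ?sqr_ge0 //; split=> //.
by rewrite -exprM mulnC exprM c3.
Qed.

Lemma pow23_sqrtE (R : rcfType) (x y : R) :
  is_pow23 x y -> Num.sqrt y ^+ 2 = y /\ Num.sqrt y ^+ 3 = x.
Proof.
move=> [x_ge0 [y_ge0 y3]]; have s2 : Num.sqrt y ^+ 2 = y by rewrite sqr_sqrtr.
split=> //; apply/eqP; rewrite -(@eqrXn2 _ 2) ?exprn_ge0 ?sqrtr_ge0 //.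
by rewrite -exprM mulnC exprM s2 y3.
Qed.

Lemma gram_mxpow23_exists (R : rcfType) k T (C : 'M[R]_(k, T)) :
  exists P, is_mxpow23 (C *m C^T) P.
Proof.
have symCCt : (C *m C^T)^T = C *m C^T by rewrite trmx_mul trmxK.
have [Q [d [QtQ CCt]]] := sym_spectral symCCt.
have d_ge0 i : 0 <= d 0 i.
  rewrite (gram_diag_entry i (gram_diag_rotate QtQ CCt)).
  by apply: sumr_ge0 => j _; rewrite sqr_ge0.
have [e de] := fin_all_exists (fun i => pow23_exists (d_ge0 i)).
exists (Q *m diag_mx (\row_i e i) *m Q^T), Q, d, (\row_i e i).
by split=> // i; rewrite mxE.
Qed.

Section SaddlePoint.
Variables (R : rcfType) (A B : Type) (g : A -> B -> R).

Definition saddle_point (a0 : A) (b0 : B) :=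
  (forall a, g a b0 <= g a0 b0) /\ (forall b, g a0 b0 <= g a0 b).

Lemma saddle_maxmin a0 b0 : saddle_point a0 b0 -> maxmin_value g (g a0 b0).
Proof.
by move=> [ga gb]; exists a0, b0; split => // a u /(_ b0) /le_trans; apply.
Qed.

Lemma saddle_minmax a0 b0 :
  saddle_point a0 b0 -> minmax_value (fun b a => g a b) (g a0 b0).
Proof.
by move=> [ga gb]; exists b0, a0; split => // b u /(_ a0); apply: le_trans.
Qed.

Lemma saddle_value_unique a1 b1 a2 b2 :
  saddle_point a1 b1 -> saddle_point a2 b2 -> g a1 b1 = g a2 b2.
Proof.
move=> [ga1 gb1] [ga2 gb2]; apply/eqP; rewrite eq_le.
by rewrite (le_trans (gb1 b2) (ga2 a1)) (le_trans (gb2 b1) (ga1 a2)).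
Qed.

End SaddlePoint.

Section PSP.
Variables (R : rcfType) (n k T : nat) (X : 'M[R]_(n, T)).
Implicit Types (W : 'M[R]_(k, n)) (M : 'M[R]_k) (Y Z : 'M[R]_(k, T)).

Local Notation L := (Lpsp X).
Local Notation Wopt Y := (T%:R^-1 *: (Y *m X^T)).
Local Notation Mopt Y := (T%:R^-1 *: (Y *m Y^T)).

Lemma LpspE W M Y :
  L W M Y = - (4 / T%:R) * frob W (Y *m X^T) + (2 / T%:R) * frob M (Y *m Y^T)
            + 2 * frob W W - frob M M.
Proof.
have trW : \tr (X^T *m W^T *m Y) = frob W (Y *m X^T).
  by rewrite /frob -mulmxA mxtrace_mulC -mulmxA.
have trM : \tr (Y^T *m M *m Y) = frob M (Y *m Y^T).
  by rewrite frobC /frob trmx_mul trmxK -mulmxA mxtrace_mulC -mulmxA mxtrace_mulC.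
by rewrite /Lpsp mxtraceD !mxtraceZ trW trM.
Qed.

Lemma Lpsp_complete_squares W M Y :
  L W M Y = 2 * frob (W - Wopt Y) (W - Wopt Y) - frob (M - Mopt Y) (M - Mopt Y)
            + T%:R^-1 ^+ 2 * (frob (Y *m Y^T) (Y *m Y^T)
                               - 2 * frob (Y *m X^T) (Y *m X^T)).
Proof. by rewrite LpspE !frobBB !frobZl !frobZr; ring. Qed.

Lemma Lpsp_minmax_at Y :
  minmax_at (fun W M => L W M Y) (Wopt Y) (Mopt Y)
    ((T%:R ^+ 2)^-1 * fnorm (X^T *m X - Y^T *m Y) ^+ 2
     - (T%:R ^+ 2)^-1 * fnorm (X^T *m X) ^+ 2).
Proof.
rewrite -mulrBr fnorm_gram_gap -exprVn; split => [|M|W u /(_ (Mopt Y))].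
- by rewrite Lpsp_complete_squares !subrr !frob0 mulr0 subr0 add0r.
- rewrite Lpsp_complete_squares subrr frob0 mulr0 add0r.
  by have := frob_ge0 (M - Mopt Y); lra.
- rewrite Lpsp_complete_squares subrr frob0.
  by have := frob_ge0 (W - Wopt Y); lra.
Qed.

Lemma Lpsp_shiftY W M Y Z :
  M^T = M -> M *m Y = W *m X ->
  L W M (Y + Z) = L W M Y + (2 / T%:R) * frob M (Z *m Z^T).
Proof.
move=> symM MY; rewrite !LpspE linearD /= !mulmxDl !mulmxDr !frobDr.
have crossW : frob W (Z *m X^T) = frob (W *m X) Z by rewrite frob_mulmxTr.
have crossYZ : frob M (Y *m Z^T) = frob (W *m X) Z.
  by rewrite frob_mulmxTr frob_mulmxl symM MY frobC.
have crossZY : frob M (Z *m Y^T) = frob (W *m X) Z by rewrite frob_mulmxTr MY.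
rewrite crossW crossYZ crossZY; ring.
Qed.

Lemma Lpsp_saddle W Y : (0 < T)%N -> Y *m Y^T *m Y = T%:R *: (W *m X) ->
  saddle_point (L W) (Mopt Y) Y
  /\ L W (Mopt Y) Y = - (3 / T%:R) * frob (W *m X) Y + 2 * frob W W.
Proof.
move=> T_gt0 cubeY; have T_neq0 : T%:R != 0 :> R by rewrite pnatr_eq0 -lt0n.
have MY : Mopt Y *m Y = W *m X.
  by rewrite -scalemxAl cubeY scalerA mulVf // scale1r.
have symM : (Mopt Y)^T = Mopt Y by rewrite linearZ /= trmx_mul trmxK.
split; first split.
- move=> M; rewrite !Lpsp_complete_squares subrr frob0.
  by have := frob_ge0 (M - Mopt Y); lra.
- move=> Y'; rewrite -[Y'](subrKC Y) (Lpsp_shiftY _ symM MY) lerDl.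
  rewrite frob_mulmxTr -scalemxAl frobZl -mulmxA frob_mulmxl.
  by rewrite !mulr_ge0 ?invr_ge0 ?ler0n ?frob_ge0.
- have gram : frob (Mopt Y) (Y *m Y^T) = frob (W *m X) Y by rewrite frob_mulmxTr MY.
  have normM : frob (Mopt Y) (Mopt Y) = T%:R^-1 * frob (W *m X) Y.
    by rewrite frobZr gram.
  by rewrite LpspE frob_mulmxTr gram normM; field.
Qed.

Lemma Lpsp_saddle_pow23 W P tau :
  (0 < T)%N -> is_mxpow23 ((W *m X) *m (W *m X)^T) P -> is_pow23 T%:R tau ->
  exists M0 Y0, saddle_point (L W) M0 Y0
                /\ L W M0 Y0 = \tr (- (3 / tau) *: P + 2 *: (W *m W^T)).
Proof.
move=> T_gt0 [Q [d [e [QtQ de CCt ->]]]] /pow23_sqrtE [t2 t3].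
(* t = T^(1/3) and s = d^(1/3), so that Y = t (C C^T)^(-1/3) C. *)
set t := Num.sqrt tau in t2 t3; pose s := map_mx Num.sqrt e.
have s3 i : s 0 i ^+ 3 = d 0 i by rewrite mxE; case: (pow23_sqrtE (de i)).
have [Y [cubeY frobY]] := gram_cube_root t QtQ CCt s3.
rewrite t3 in cubeY; have [saddle value] := Lpsp_saddle T_gt0 cubeY.
exists (Mopt Y), Y; split=> //.
have trP : \tr (Q *m diag_mx e *m Q^T) = \sum_i s 0 i ^+ 2.
  rewrite mxtrace_mulC mulmxA QtQ mul1mx mxtrace_diag.
  by apply: eq_bigr => i _; rewrite mxE; case: (pow23_sqrtE (de i)).
have t_neq0 : t != 0.
  by apply: contraTneq T_gt0 => t0; rewrite -(ltr0n R) -t3 t0 expr0n ltxx.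
rewrite value frobY mxtraceD !mxtraceZ trP mxtrace_mulC -t2 -t3.
by field.
Qed.

End PSP.

Theorem mainTheorem6 (R : rcfType) (n k T : nat) (X : 'M[R]_(n, T)) :
  (0 < T)%N -> (k <= n)%N ->
  (forall Y : 'M[R]_(k, T),
     minmax_at (fun (W : 'M[R]_(k, n)) (M : 'M[R]_k) => Lpsp X W M Y)
       (T%:R^-1 *: (Y *m X^T)) (T%:R^-1 *: (Y *m Y^T))
       ((T%:R ^+ 2)^-1 * fnorm (X^T *m X - Y^T *m Y) ^+ 2
        - (T%:R ^+ 2)^-1 * fnorm (X^T *m X) ^+ 2)) /\
  (forall W : 'M[R]_(k, n),
     exists v : R,
       [/\ maxmin_value (fun (M : 'M[R]_k) (Y : 'M[R]_(k, T)) => Lpsp X W M Y) v,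
           minmax_value (fun (Y : 'M[R]_(k, T)) (M : 'M[R]_k) => Lpsp X W M Y) v &
           forall (P : 'M[R]_k) (tau : R),
             is_mxpow23 (W *m X *m X^T *m W^T) P ->
             is_pow23 (T%:R) tau ->
             v = \tr (- (3 / tau) *: P + 2 *: (W *m W^T))]).
Proof.
move=> T_gt0 _; split=> [Y|W]; first exact: Lpsp_minmax_at.
have gram : W *m X *m X^T *m W^T = (W *m X) *m (W *m X)^T.
  by rewrite trmx_mul !mulmxA.
have [P0 P0_pow] := gram_mxpow23_exists (W *m X).
have [tau0 tau0_pow] := pow23_exists (ler0n R T).
have [M0 [Y0 [saddle0 _]]] := Lpsp_saddle_pow23 T_gt0 P0_pow tau0_pow.
exists (Lpsp X W M0 Y0); split; [exact: saddle_maxmin | exact: saddle_minmax |].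
move=> P tau; rewrite gram => P_pow tau_pow.
have [M1 [Y1 [saddle1 <-]]] := Lpsp_saddle_pow23 T_gt0 P_pow tau_pow.
exact: saddle_value_unique saddle0 saddle1.
Qed.
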